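(* Let $(C,D)$ and $(C,D')$ be two multifactorizations of $w$ on the same underlying $R$-module $C$, supported in finitely many filtration gradings, with $D=\sum_i d_i$, $D'=\sum_i d_i'$, and suppose $d_i=d_i'$ for all $i<n$ (some $n\ge1$). Then $d_n-d_n'$ is a chain map of matrix factorizations $(C,d_0)\to(C,d_0)\{-k\}$. If moreover this chain map is $0$-homotopic to the zero map, then there is a differential $D''=\sum_i d_i''$ on $C$ such that $(C,D'')$ is a multifactorization of $w$ isomorphic to $(C,D')$ and $d_i''=d_i$ for all $i<n+1$.
   Context: All rings and modules are bigraded by an internal grading and a filtration grading. For a module $M$, $M\{i,j\}$ denotes $M$ with gradings shifted so that an element of bidegree $(a,b)$ in $M$ has bidegree $(a+i,b+j)$ in $M\{i,j\}$, $M\{i\}=M\{i,0\}$; a shift by an odd internal amount negates the differential (Koszul sign rule using the internal grading). Fix a ring $R$ and homogeneous $w\in R$ of bidegree $(2k,0)$, $k$ odd. A matrix factorization of $w$ is an $R$-module with $R$-linear $d$ of bidegree $(k,0)$, $d^2=w$. A multifactorization of $w$ is an $R$-module $C$ with $R$-linear maps $d_i:C\to C$ ($i\ge0$) homogeneous of bidegree $(k,i)$ such that $D=\sum_id_i$ satisfies $D^2=w$; $(C,d_0)$ is its vertical factorization. A chain map $F:(C,D)\to(C',D')$ is $F=\sum_{i\ge0}f_i$, $f_i$ $R$-linear of bidegree $(0,i)$, with $FD=D'F$; an isomorphism of multifactorizations is an invertible chain map. For an integer $m$, an $m$-homotopy between chain maps $F,G$ is $H=\sum_{i\ge-m}h_i$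 with $h_i$ of bidegree $(-k,i)$ and $F-G=HD+D'H$ (for matrix factorizations of the vertical kind, only the $d_0$ differentials enter). *)

From HB Require Import structures.
From mathcomp Require Import all_boot all_order all_algebra.
Set Implicit Arguments. Unset Strict Implicit. Unset Printing Implicit Defensive.
Import Order.TTheory GRing.Theory Num.Theory.
Local Open Scope ring_scope.

(* A bigrading of an abelian group V: G a b x  <=>  x is homogeneous of
   bidegree (a,b) (a = internal grading, b = filtration grading).
   V is the internal direct sum of the G a b. *)
Definition graded_by (V : zmodType) (G : int -> int -> V -> bool) : Prop :=
  [/\ (forall a b, G a b 0),
      (forall a b x y, G a b x -> G a b y -> G a b (x - y)),
      (forall x : V, exists s : seq ((int * int) * V),
          [/\ uniq (map fst s), (forall p, p \in s -> G p.1.1 p.1.2 p.2)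
            & x = \sum_(p <- s) p.2])
    & (forall s : seq ((int * int) * V),
          uniq (map fst s) -> (forall p, p \in s -> G p.1.1 p.1.2 p.2) ->
          \sum_(p <- s) p.2 = 0 -> forall p, p \in s -> p.2 = 0)].

Definition bigraded_ring (R : pzRingType) (RG : int -> int -> R -> bool) : Prop :=
  [/\ graded_by RG, RG 0 0 1
    & forall a b c e (r s : R), RG a b r -> RG c e s -> RG (a + c) (b + e) (r * s)].

Definition bigraded_module (R : pzRingType) (RG : int -> int -> R -> bool)
  (C : lmodType R) (CG : int -> int -> C -> bool) : Prop :=
  graded_by CG /\
  forall a b c e (r : R) (x : C), RG a b r -> CG c e x -> CG (a + c) (b + e) (r *: x).

(* grading of M{i,j}: an element of bidegree (a,b) in M has bidegree
   (a+i,b+j) in M{i,j} *)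
Definition shiftG (R : pzRingType) (C : lmodType R) (CG : int -> int -> C -> bool)
  (i j : int) : int -> int -> C -> bool := fun a b => CG (a - i) (b - j).

(* Koszul sign rule: a shift by an odd internal amount negates the differential *)
Definition shift_fam (R : pzRingType) (C : lmodType R) (i : int)
  (d : nat -> C -> C) : nat -> C -> C :=
  fun n x => if odd `|i|%N then - d n x else d n x.

Definition fin_support (R : pzRingType) (C : lmodType R)
  (CG : int -> int -> C -> bool) : Prop :=
  exists lo hi : int, forall a b (x : C), CG a b x -> x != 0 -> lo <= b <= hi.

Definition hmap (R : pzRingType) (C : lmodType R) (G G' : int -> int -> C -> bool)
  (p q : int) (f : C -> C) : Prop :=
  (forall (r : R) (x y : C), f (r *: x + y) = r *: f x + f y) /\
  (forall a b x, G a b x -> G' (a + p) (b + q) (f x)).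

Definition fin_fam (R : pzRingType) (C : lmodType R) (f : nat -> C -> C) (N : nat) : Prop :=
  forall i x, (N <= i)%N -> f i x = 0.

Definition fsum (R : pzRingType) (C : lmodType R) (f : nat -> C -> C) (N : nat) (x : C) : C :=
  \sum_(i < N) f i x.

Definition multifact (R : pzRingType) (C : lmodType R) (CG : int -> int -> C -> bool)
  (k : int) (w : R) (d : nat -> C -> C) : Prop :=
  (forall i : nat, hmap CG CG k i (d i)) /\
  exists N, fin_fam d N /\ forall x, fsum d N (fsum d N x) = w *: x.

(* a matrix factorization d0, viewed as a multifactorization with d_i = 0, i > 0 *)
Definition mf_fam (R : pzRingType) (C : lmodType R) (d0 : C -> C) : nat -> C -> C :=
  fun i => if i == 0%N then d0 else (fun _ => 0).

Definition single (R : pzRingType) (C : lmodType R) (n : nat) (g : C -> C) : nat -> C -> C :=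
  fun i => if i == n then g else (fun _ => 0).

Definition chain_map (R : pzRingType) (C : lmodType R) (G G' : int -> int -> C -> bool)
  (d d' f : nat -> C -> C) : Prop :=
  (forall i : nat, hmap G G' 0 i (f i)) /\
  exists N, [/\ fin_fam f N, fin_fam d N, fin_fam d' N &
    forall x, fsum f N (fsum d N x) = fsum d' N (fsum f N x)].

Definition mfact_iso (R : pzRingType) (C : lmodType R) (G G' : int -> int -> C -> bool)
  (d d' : nat -> C -> C) : Prop :=
  exists f g : nat -> C -> C,
    [/\ chain_map G G' d d' f, chain_map G' G d' d g &
      exists N, [/\ fin_fam f N, fin_fam g N &
        forall x, fsum g N (fsum f N x) = x /\ fsum f N (fsum g N x) = x]].

(* m-homotopy with m = 0: H = \sum_{i >= 0} h_i, h_i of bidegree (-k,i),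
   F - G = H D + D' H *)
Definition homotopic0 (R : pzRingType) (C : lmodType R) (G G' : int -> int -> C -> bool)
  (k : int) (d d' f g : nat -> C -> C) : Prop :=
  exists h : nat -> C -> C,
    (forall i : nat, hmap G G' (- k) i (h i)) /\
    exists N, [/\ fin_fam h N, fin_fam f N, fin_fam g N, fin_fam d N & fin_fam d' N] /\
      forall x, fsum f N x - fsum g N x = fsum h N (fsum d N x) + fsum d' N (fsum h N x).

From HB Require Import structures.
From mathcomp Require Import all_boot all_order all_algebra.
From mathcomp Require Import zify ring.
From Stdlib Require Import FunctionalExtensionality.
Import Order.TTheory GRing.Theory Num.Theory.
Local Open Scope ring_scope.

Set Implicit Arguments. Unset Strict Implicit. Unset Printing Implicit Defensive.

(* Let D = \sum_i d_i and D' = \sum_i d'_i be multifactorizations of w on the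
   same bigraded module C with d_i = d'_i for i < n, n >= 1.  Since D^2 = w has
   filtration degree 0, every component of positive filtration degree of D^2
   vanishes; comparing the degree-n components of D^2 and D'^2 shows that
   d_n - d'_n anticommutes with d_0, i.e. it is a chain map
   (C, d_0) -> (C, d_0){-k}.  A 0-homotopy from it to 0 provides, in its
   degree-n component, a map phi of bidegree (0, n) with
   d_n - d'_n = phi d_0 - d_0 phi.  As C is supported in finitely many
   filtration degrees, phi is nilpotent, so F = 1 - phi is invertible with
   inverse G = \sum_m phi^m, and D'' = G D' F is a multifactorization
   isomorphic to D' (via F and G) whose components below degree n are those
   of D' and whose degree-n component is d'_n + phi d'_0 - d'_0 phi = d_n. *)

Section LinearMaps.
Variables (R : pzRingType) (C : lmodType R).
Implicit Types (f g : C -> C).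

Definition lin f : Prop := forall (r : R) (x y : C), f (r *: x + y) = r *: f x + f y.

Lemma linD f : lin f -> {morph f : x y / x + y}.
Proof. by move=> lf x y; have := lf 1 x y; rewrite !scale1r. Qed.

Lemma lin0 f : lin f -> f 0 = 0.
Proof. by move=> lf; apply: (@addrI _ (f 0)); rewrite -linD // !addr0. Qed.

Lemma linZ f : lin f -> forall r x, f (r *: x) = r *: f x.
Proof. by move=> lf r x; have := lf r x 0; rewrite !addr0 lin0 // addr0. Qed.

Lemma linN f : lin f -> forall x, f (- x) = - f x.
Proof. by move=> lf x; rewrite -scaleN1r linZ // scaleN1r. Qed.

Lemma linB f : lin f -> forall x y, f (x - y) = f x - f y.
Proof. by move=> lf x y; rewrite linD // linN. Qed.

Lemma lin_sum f (I : Type) (s : seq I) (P : pred I) (F : I -> C) :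
  lin f -> f (\sum_(i <- s | P i) F i) = \sum_(i <- s | P i) f (F i).
Proof. by move=> lf; apply: big_morph; [exact: linD | exact: lin0]. Qed.

Lemma lin_zero : lin (fun _ => 0).
Proof. by move=> r x y; rewrite scaler0 addr0. Qed.

Lemma lin_comp f g : lin f -> lin g -> lin (fun x => f (g x)).
Proof. by move=> lf lg r x y; rewrite lg lf. Qed.

Lemma lin_opp f : lin f -> lin (fun x => - f x).
Proof. by move=> lf r x y; rewrite lf opprD scalerN. Qed.

Lemma lin_sub f g : lin f -> lin g -> lin (fun x => f x - g x).
Proof. by move=> lf lg r x y; rewrite lf lg scalerBr opprD addrACA. Qed.

Lemma lin_big (I : Type) (s : seq I) (P : pred I) (F : I -> C -> C) :
  (forall i, lin (F i)) -> lin (fun x => \sum_(i <- s | P i) F i x).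
Proof.
move=> lF r x y; rewrite scaler_sumr -big_split /=.
by apply: eq_bigr => i _; rewrite lF.
Qed.

Lemma lin_iter f m : lin f -> lin (iter m f).
Proof. by move=> lf; elim: m => [|m IH] r x y //=; rewrite IH lf. Qed.

End LinearMaps.

Section Grading.
Variables (V : zmodType) (G : int -> int -> V -> bool).
Hypothesis gG : graded_by G.

Lemma gr0 a b : G a b 0.
Proof. by case: gG. Qed.

Lemma grB a b x y : G a b x -> G a b y -> G a b (x - y).
Proof. by case: gG => _ gB _ _; apply: gB. Qed.

Lemma grN a b x : G a b x -> G a b (- x).
Proof. by move=> Gx; rewrite -sub0r; apply: grB => //; apply: gr0. Qed.

Lemma grD a b x y : G a b x -> G a b y -> G a b (x + y).
Proof. by move=> Gx Gy; rewrite -[y]opprK; apply: grB => //; apply: grN. Qed.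

Lemma gr_sum (I : Type) (s : seq I) (P : pred I) (F : I -> V) a b :
  (forall i, P i -> G a b (F i)) -> G a b (\sum_(i <- s | P i) F i).
Proof. by move=> GF; apply: (big_ind (G a b)) => //; [apply: gr0 | apply: grD]. Qed.

Lemma gr_ext (W : zmodType) (T : V -> W) :
  {morph T : x y / x + y} -> (forall a b y, G a b y -> T y = 0) ->
  forall x, T x = 0.
Proof.
move=> TD T0 x; case: gG => _ _ decomp _; have [s [_ Gs ->]] := decomp x.
have T00 : T 0 = 0 by apply: (@addrI _ (T 0)); rewrite -TD !addr0.
rewrite (big_morph T TD T00) big_seq; apply: big1 => p ps.
exact: (T0 p.1.1 p.1.2 _ (Gs p ps)).
Qed.

Lemma homogeneous_sum_eq0 (N : nat) (u : nat -> V) (a b : int) :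
  (forall i, (i < N)%N -> G a (b + i%:Z) (u i)) -> \sum_(i < N) u i = 0 ->
  forall i, (i < N)%N -> u i = 0.
Proof.
case: gG => _ _ _ direct Gu sum0 i iN.
pose s := [seq ((a, b + (val j)%:Z), u j) | j : 'I_N <- index_enum 'I_N].
apply: (direct s _ _ _ ((a, b + i%:Z), u i)).
- rewrite -map_comp map_inj_uniq ?index_enum_uniq //.
  move=> j1 j2 /= [] /addrI [] ?; exact: val_inj.
- by move=> p /mapP [j _ ->] /=; apply/Gu/ltn_ord.
- by rewrite big_map.
- by apply/mapP; exists (Ordinal iN); rewrite ?mem_index_enum.
Qed.

End Grading.

Section Families.
Variables (R : pzRingType) (C : lmodType R).
Implicit Types (f g e : nat -> C -> C).

Lemma sum_pick (V : zmodType) (K c : nat) (F : nat -> V) :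
  \sum_(j < K) (if (j : nat) == c then F j else 0) = if (c < K)%N then F c else 0.
Proof. by rewrite -big_mkcond /= big_ord1_eq. Qed.

Lemma fin_fam_le f A B : fin_fam f A -> (A <= B)%N -> fin_fam f B.
Proof. by move=> fA AB i x iB; apply: fA; apply: leq_trans iB. Qed.

Lemma fsum_widen f A N x : fin_fam f A -> (A <= N)%N -> fsum f N x = fsum f A x.
Proof.
move=> fA AN; rewrite /fsum (big_ord_widen N (fun i => f i x) AN) [RHS]big_mkcond.
by apply: eq_bigr => i _; case: ltnP => // /fA ->.
Qed.

Lemma fsum_single f c N x :
  (forall i y, i != c -> f i y = 0) -> fin_fam f N -> fsum f N x = f c x.
Proof.
move=> fc fN; rewrite /fsum (eq_bigr (fun i : 'I_N => if (i : nat) == c then f c x else 0)).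
  by rewrite (sum_pick N c (fun _ => f c x)); case: ltnP => // cN; rewrite fN.
by move=> i _; case: eqP => [-> | /eqP]; last exact: fc.
Qed.

(* Convolution of families: the components of the composite of \sum_i f_i
   and \sum_j g_j, graded by the total filtration degree. *)
Definition conv f g : nat -> C -> C :=
  fun i x => \sum_(j < i.+1) f j (g (i - j)%N x).

Lemma conv_lin f g i :
  (forall j, lin (f j)) -> (forall j, lin (g j)) -> lin (conv f g i).
Proof.
move=> lf lg; apply: (@lin_big _ _ _ _ _ (fun (j : 'I_i.+1) x => f j (g (i - j)%N x))).
by move=> j; apply: lin_comp.
Qed.

Lemma conv_fin f g A B :
  (forall j, lin (f j)) -> fin_fam f A -> fin_fam g B -> fin_fam (conv f g) (A + B).
Proof.
move=> lf fA gB i x iAB; apply: big1 => j _.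
have [jA | Aj] := ltnP j A; last by rewrite fA.
by rewrite gB ?lin0 //; have := ltn_ord j; lia.
Qed.

Lemma conv_pairs f g i K x : (i < K)%N ->
  conv f g i x = \sum_(j < K) \sum_(l < K) (if (j + l == i)%N then f j (g l x) else 0).
Proof.
move=> iK; rewrite /conv (big_ord_widen K (fun j => f j (g (i - j)%N x)) iK) big_mkcond.
apply: eq_bigr => j _.
rewrite (eq_bigr (fun l : 'I_K =>
  if (l : nat) == (i - j)%N then (if (j <= i)%N then f j (g l x) else 0) else 0)).
  by rewrite (sum_pick K (i - j) (fun l => if (j <= i)%N then f j (g l x) else 0))
             ltnS (leq_ltn_trans (leq_subr _ _) iK).
move=> l _; case: (leqP j i) => ji.
  by have -> : (j + l == i)%N = ((l : nat) == i - j)%N by apply/eqP/eqP; lia.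
have -> : (j + l == i)%N = false by apply/negbTE/eqP; lia.
by case: ifP.
Qed.

Lemma fsum_conv f g A K x :
  (forall j, lin (f j)) -> fin_fam f A -> fin_fam g A -> (A + A <= K)%N ->
  fsum (conv f g) K x = fsum f A (fsum g A x).
Proof.
move=> lf fA gA AK; have AK' : (A <= K)%N by apply: leq_trans AK; apply: leq_addr.
rewrite -(fsum_widen _ fA AK') -(fsum_widen _ gA AK') /fsum.
under eq_bigr => i _ do rewrite (conv_pairs _ _ _ (ltn_ord i)).
rewrite exchange_big; apply: eq_bigr => j _.
rewrite exchange_big (lin_sum _ _ _ (lf j)); apply: eq_bigr => l _.
under eq_bigr => i _ do rewrite eq_sym.
rewrite (sum_pick K (j + l) (fun _ => f j (g l x))); case: ltnP => // jlK.
have [jA | Aj] := ltnP j A; last by rewrite fA.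
by rewrite gA ?lin0 //; lia.
Qed.

Lemma conv_hmap (G : int -> int -> C -> bool) f g (p q : int) (i : nat) :
  graded_by G -> (forall j : nat, hmap G G p j (f j)) ->
  (forall j : nat, hmap G G q j (g j)) -> hmap G G (p + q) i (conv f g i).
Proof.
move=> gG hf hg; split; first by apply: conv_lin => j; [case: (hf j) | case: (hg j)].
move=> a b x Gx; apply: gr_sum => // j _.
have ji := ltn_ord j.
have Gfg := (hf j).2 _ _ _ ((hg (i - j)%N).2 _ _ _ Gx).
have -> : a + (p + q) = a + q + p by ring.
by have -> : b + i%:Z = b + (i - j)%N%:Z + j%:Z by lia.
Qed.

End Families.

Section Unipotent.
Variables (R : pzRingType) (C : lmodType R).
Implicit Types (f e : nat -> C -> C).

Definition unipotent_upto f (n : nat) (c : C -> C) : Prop :=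
  [/\ forall x, f 0%N x = x, forall j x, (0 < j < n)%N -> f j x = 0
    & forall x, f n x = c x].

Lemma sum_unipotent f n c i (T : nat -> C -> C) (y : nat -> C) :
  (0 < n)%N -> unipotent_upto f n c -> (i <= n)%N -> (forall j, T j 0 = 0) ->
  \sum_(j < i.+1) T j (f j (y j)) = T 0%N (y 0%N) + (if i == n then T n (c (y n)) else 0).
Proof.
move=> n0 [f0 fmid fn] iN T0.
rewrite (eq_bigr (fun j : 'I_i.+1 => (if (j : nat) == 0%N then T 0%N (y 0%N) else 0)
                                  + (if (j : nat) == n then T n (c (y n)) else 0))).
  rewrite big_split /= (sum_pick i.+1 0 (fun _ => T 0%N (y 0%N))).
  by rewrite (sum_pick i.+1 n (fun _ => T n (c (y n)))) ltnS eqn_leq iN.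
move=> [j ji] _ /=; case: (eqVneq j 0%N) => [-> | j0].
  by rewrite f0 eq_sym (gtn_eqF n0) addr0.
case: (eqVneq j n) => [-> | jn]; first by rewrite fn add0r.
by rewrite fmid ?T0 ?addr0 //; rewrite lt0n j0 /=; lia.
Qed.

Lemma conv_unipotent_l f e n c i x :
  (0 < n)%N -> unipotent_upto f n c -> (i <= n)%N ->
  conv f e i x = e i x + (if i == n then c (e 0%N x) else 0).
Proof.
move=> n0 uf iN; rewrite /conv (sum_unipotent (T := fun _ z => z)
  (fun j => e (i - j)%N x) n0 uf iN) // subn0.
by case: eqVneq => // ->; rewrite subnn.
Qed.

Lemma conv_unipotent_r e f n c i x :
  (0 < n)%N -> (forall j, lin (e j)) -> unipotent_upto f n c -> (i <= n)%N ->
  conv e f i x = e i x + (if i == n then e 0%N (c x) else 0).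
Proof.
move=> n0 le uf iN; rewrite /conv (reindex_inj rev_ord_inj) /=.
under eq_bigr => j _ do rewrite subSS (@subKn j i (ltn_ord j)).
rewrite (sum_unipotent (T := fun j => e (i - j)%N) (fun _ => x) n0 uf iN).
  by rewrite subn0; case: eqVneq => // ->; rewrite subnn.
by move=> j; apply: lin0.
Qed.

End Unipotent.

Section Components.
Variables (R : pzRingType) (C : lmodType R) (G : int -> int -> C -> bool).
Hypothesis gG : graded_by G.
Implicit Types (f e : nat -> C -> C).

Lemma graded_family_vanishes (p : int) e N :
  (forall i, {morph e i : x y / x + y}) ->
  (forall i a b x, G a b x -> G (a + p) (b + i%:Z) (e i x)) ->
  fin_fam e N -> (forall x, fsum e N x = 0) -> forall i x, e i x = 0.
Proof.
move=> eD Ge eN sum0 i; have [iN | Ni] := ltnP i N; last by move=> x; apply: eN.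
apply: (gr_ext gG (eD i)) => a b y Gy.
exact: (homogeneous_sum_eq0 gG (u := fun j => e j y) (fun j _ => Ge j a b y Gy) (sum0 y) iN).
Qed.

End Components.

Section HomogeneousMaps.
Variables (R : pzRingType) (C : lmodType R) (G : int -> int -> C -> bool).
Hypothesis gG : graded_by G.
Implicit Types (f g : C -> C).

Lemma hmap_shiftG (s p q : int) f :
  hmap G (shiftG G s 0) p q f <-> hmap G G (p - s) q f.
Proof.
rewrite /hmap /shiftG; split=> -[lf Gf]; split=> // a b x /Gf;
  by rewrite subr0 addrA.
Qed.

Lemma hmap_lin p q f : hmap G G p q f -> lin f.
Proof. by case. Qed.

Lemma hmap_comp p q p' q' f g :
  hmap G G p q f -> hmap G G p' q' g -> hmap G G (p' + p) (q' + q) (fun x => f (g x)).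
Proof.
move=> [lf Gf] [lg Gg]; split; first exact: lin_comp.
by move=> a b x /Gg /Gf; rewrite !addrA.
Qed.

Lemma hmap_sub p q f g :
  hmap G G p q f -> hmap G G p q g -> hmap G G p q (fun x => f x - g x).
Proof.
move=> [lf Gf] [lg Gg]; split; first exact: lin_sub.
by move=> a b x Gx; apply: grB => //; [apply: Gf | apply: Gg].
Qed.

Lemma hmap_single p (c i : nat) g : hmap G G p c g -> hmap G G p i (single c g i).
Proof.
rewrite /single; case: eqVneq => [-> // | _] _; split; first exact: lin_zero.
by move=> a b x _; apply: gr0.
Qed.

End HomogeneousMaps.

Section SingleFamilies.
Variables (R : pzRingType) (C : lmodType R).

Lemma mf_fam_single (d0 : C -> C) : mf_fam d0 = single 0 d0.
Proof. by []. Qed.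

Lemma fin_single (c : nat) (g : C -> C) : fin_fam (single c g) c.+1.
Proof. by move=> i x ci; rewrite /single gtn_eqF. Qed.

Lemma fsum_single_fam (c N : nat) (g : C -> C) x :
  fin_fam (single c g) N -> fsum (single c g) N x = g x.
Proof.
by move=> fN; rewrite (fsum_single (c := c)) /single ?eqxx // => i y /negbTE ->.
Qed.

Lemma shift_fam_odd (i : int) (f : nat -> C -> C) j x :
  odd `|i|%N -> shift_fam i f j x = - f j x.
Proof. by rewrite /shift_fam => ->. Qed.

Lemma fin_shift_odd (i : int) (f : nat -> C -> C) N :
  odd `|i|%N -> fin_fam f N -> fin_fam (shift_fam i f) N.
Proof. by move=> oi fN j x Nj; rewrite shift_fam_odd // fN ?oppr0. Qed.

Lemma fsum_shift_odd (i : int) (f : nat -> C -> C) N x :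
  odd `|i|%N -> fsum (shift_fam i f) N x = - fsum f N x.
Proof.
by move=> oi; rewrite /fsum -sumrN; apply: eq_bigr => j _; rewrite shift_fam_odd.
Qed.

End SingleFamilies.

Section Multifactorizations.
Variables (R : pzRingType) (RG : int -> int -> R -> bool).
Variables (C : lmodType R) (CG : int -> int -> C -> bool) (k : int) (w : R).
Hypotheses (HM : bigraded_module RG CG) (Hw : RG (k *+ 2) 0 w).
Implicit Types (d : nat -> C -> C).

Let gG : graded_by CG. Proof. by case: HM. Qed.

Lemma multifact_widen d : multifact CG k w d ->
  exists N, forall M, (N <= M)%N -> fin_fam d M /\ forall x, fsum d M (fsum d M x) = w *: x.
Proof.
move=> [_ [N [fN DD]]]; exists N => M NM; split; first exact: fin_fam_le fN NM.
by move=> x; rewrite !(fsum_widen _ fN NM).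
Qed.

(* D^2 = w, being of filtration degree 0, forces every component of D^2 of
   positive filtration degree to vanish. *)
Lemma multifact_components d : multifact CG k w d ->
  forall m x, (0 < m)%N -> conv d d m x = 0.
Proof.
move=> Hd m x m0; have [hd _] := Hd; have [N HN] := multifact_widen Hd.
have [fN DD] := HN N.+1 (leqnSn N).
have ld j : lin (d j) by case: (hd j).
pose e i y := conv d d i y - (if i == 0%N then w *: y else 0).
have eD i : {morph e i : y z / y + z}.
  move=> y z; rewrite /e (linD (conv_lin i ld ld)).
  by case: eqVneq => _; rewrite ?subr0 // scalerDr opprD addrACA.
have Ge i a b y : CG a b y -> CG (a + (k + k)) (b + i%:Z) (e i y).
  move=> Gy; apply: grB => //; first exact: (conv_hmap i gG hd hd).2.
  case: eqVneq => [-> | _]; last exact: gr0.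
  by have := HM.2 _ _ _ _ _ _ Hw Gy; rewrite add0r addr0 mulr2n addrC.
have eN : fin_fam e (N.+1 + N.+1).
  move=> i y Ni; rewrite /e (conv_fin ld fN fN) //.
  have -> : (i == 0%N) = false by apply/negbTE; lia.
  by rewrite subrr.
have e0 y : fsum e (N.+1 + N.+1) y = 0.
  rewrite /fsum /e sumrB (sum_pick _ 0 (fun _ => w *: y)) addSn ltn0Sn.
  rewrite -[\sum_(i < _) conv d d i y]/(fsum (conv d d) _ y).
  by rewrite (fsum_conv y ld fN fN (leqnn _)) DD subrr.
have := graded_family_vanishes gG eD Ge eN e0 m x.
by rewrite /e gtn_eqF // subr0.
Qed.

(* If D and D' agree below degree n, comparing the degree-n components of
   D^2 = w = D'^2 shows that d_n - d'_n anticommutes with d_0. *)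
Lemma difference_anticommutes d d' n :
  multifact CG k w d -> multifact CG k w d' -> (0 < n)%N ->
  (forall i, (i < n)%N -> d i = d' i) ->
  forall x, d 0%N (d n x - d' n x) + (d n (d 0%N x) - d' n (d 0%N x)) = 0.
Proof.
move=> Hd Hd' n0 Heq x; have ld0 : lin (d 0%N) by case: Hd => /(_ 0%N) [].
have sq0 : conv d d n x - conv d' d' n x = 0.
  by rewrite !multifact_components ?subrr.
apply: etrans sq0; rewrite /conv -sumrB.
rewrite (eq_bigr (fun j : 'I_n.+1 =>
    (if (j : nat) == 0%N then d 0%N (d n x - d' n x) else 0)
  + (if (j : nat) == n then d n (d 0%N x) - d' n (d 0%N x) else 0))).
  rewrite big_split /= (sum_pick _ 0 (fun _ => d 0%N (d n x - d' n x))).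
  by rewrite (sum_pick _ n (fun _ => d n (d 0%N x) - d' n (d 0%N x))) ltnSn.
move=> [j jn] _ /=; case: (eqVneq j 0%N) => [-> | j0].
  by rewrite eq_sym (gtn_eqF n0) addr0 subn0 -(Heq 0%N n0) (linB ld0).
case: (eqVneq j n) => [-> | jn']; first by rewrite add0r subnn -(Heq 0%N n0).
by rewrite (Heq j) ?(Heq (n - j)%N) ?subrr ?addr0 //; lia.
Qed.

Lemma difference_chain_map d d' n :
  odd `|k|%N -> multifact CG k w d -> multifact CG k w d' -> (0 < n)%N ->
  (forall i, (i < n)%N -> d i = d' i) ->
  chain_map CG (shiftG CG (- k) 0) (mf_fam (d 0%N)) (shift_fam (- k) (mf_fam (d 0%N)))
    (single n (fun x => d n x - d' n x)).
Proof.
move=> kodd Hd Hd' n0 Heq; have [[hd _] [hd' _]] := (Hd, Hd').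
have kodd' : odd `|- k|%N by rewrite abszN.
rewrite mf_fam_single; split.
  move=> i; apply/hmap_shiftG; rewrite sub0r opprK.
  by apply: hmap_single => //; apply: hmap_sub.
have fd0 : fin_fam (single 0 (d 0%N)) n.+1.
  exact: fin_fam_le (fin_single (c := 0%N) (d 0%N)) (ltn0Sn n).
have fdn := fin_single (c := n) (fun x => d n x - d' n x).
exists n.+1; split; [by [] | by [] | exact: fin_shift_odd | move=> x].
rewrite fsum_shift_odd // !fsum_single_fam //.
by apply/eqP; rewrite -addr_eq0 addrC; apply/eqP; apply: difference_anticommutes.
Qed.

(* A 0-homotopy from d_n - d'_n to 0 yields phi of bidegree (0, n) with
   d_n - d'_n = phi d_0 - d_0 phi (its degree-n component). *)
Lemma homotopy_gauge d d' n :
  odd `|k|%N -> multifact CG k w d -> multifact CG k w d' ->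
  homotopic0 CG (shiftG CG (- k) 0) k (mf_fam (d 0%N)) (shift_fam (- k) (mf_fam (d 0%N)))
     (single n (fun x => d n x - d' n x)) (fun _ _ => 0) ->
  exists phi : C -> C, hmap CG CG 0 n phi /\
    forall x, d n x - d' n x = phi (d 0%N x) - d 0%N (phi x).
Proof.
move=> kodd [hd _] [hd' _] [h [hh [N [[fh fsg _ fd0 _] HE]]]].
have ld0 := hmap_lin (hd 0%N).
have hh0 (i : nat) : hmap CG CG 0 i (h i) by move/hmap_shiftG: (hh i); rewrite subrr.
exists (h n); split => // x.
pose e i y := h i (d 0%N y) - d 0%N (h i y) - single n (fun x => d n x - d' n x) i y.
have he (i : nat) : hmap CG CG k i (e i).
  apply: (hmap_sub gG (f := fun y => h i (d 0%N y) - d 0%N (h i y))).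
    apply: (hmap_sub gG (f := fun y => h i (d 0%N y))).
      by have := hmap_comp (hh0 i) (hd 0%N); rewrite addr0 add0r.
    by have := hmap_comp (hd 0%N) (hh0 i); rewrite addr0 add0r.
  by apply: hmap_single => //; apply: hmap_sub.
have eN : fin_fam e N by move=> i y Ni; rewrite /e !fh // fsg // lin0 // !subrr.
have e0 y : fsum e N y = 0.
  have -> : fsum e N y = fsum h N (d 0%N y) - d 0%N (fsum h N y)
      - fsum (single n (fun x => d n x - d' n x)) N y.
    by rewrite /fsum !sumrB (lin_sum _ _ _ ld0).
  have := HE y; rewrite [fsum (fun _ _ => 0) N y]big1 // subr0.
  rewrite mf_fam_single in fd0 *; rewrite fsum_shift_odd ?abszN //.
  by rewrite !fsum_single_fam // => ->; rewrite subrr.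
have := graded_family_vanishes gG (fun i => linD (hmap_lin (he i))) (fun i => (he i).2)
  eN e0 n x.
by rewrite /e /single eqxx => /eqP; rewrite subr_eq0 => /eqP <-.
Qed.

End Multifactorizations.

Section Gauge.
Variables (R : pzRingType) (C : lmodType R) (G : int -> int -> C -> bool).
Hypothesis gG : graded_by G.
Variables (n : nat) (phi : C -> C).
Hypotheses (n0 : (0 < n)%N) (hphi : hmap G G 0 n phi).

Definition gauge_fam : nat -> C -> C :=
  fun p x => if p == 0%N then x else if p == n then - phi x else 0.

(* The truncated geometric series \sum_(m < M) phi^m, with phi^m placed in
   filtration degree m * n; it inverts F once phi^M = 0. *)
Definition geom_fam (M : nat) : nat -> C -> C :=
  fun p x => \sum_(m < M) (if p == (m * n)%N then iter m phi x else 0).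

Lemma iter_hmap m : hmap G G 0 (m * n)%N (iter m phi).
Proof.
elim: m => [|m IH]; first by split=> // a b x; rewrite !addr0.
by have := hmap_comp hphi IH; rewrite addr0 mulSnr PoszD.
Qed.

Lemma gauge_hmap (j : nat) : hmap G G 0 j (gauge_fam j).
Proof.
rewrite /gauge_fam; case: eqVneq => [-> | _]; first by split=> // a b x; rewrite !addr0.
case: eqVneq => [-> | _]; last by split; [exact: lin_zero | move=> *; exact: gr0].
have [lphi Gphi] := hphi; split; first exact: lin_opp.
by move=> a b x /Gphi; apply: grN.
Qed.

Lemma geom_hmap M (j : nat) : hmap G G 0 j (geom_fam M j).
Proof.
split.
  apply: (@lin_big _ _ _ _ _ (fun (m : 'I_M) x => if j == (m * n)%N then iter m phi x else 0)).
  by move=> m; case: eqP => _; [exact: hmap_lin (iter_hmap m) | exact: lin_zero].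
move=> a b x Gx; apply: gr_sum => // m _; case: eqP => [-> | _]; last exact: gr0.
exact: (iter_hmap m).2.
Qed.

Lemma gauge_fin : fin_fam gauge_fam n.+1.
Proof. by move=> i x ni; rewrite /gauge_fam !gtn_eqF //; apply: leq_trans ni. Qed.

Lemma geom_fin M : fin_fam (geom_fam M) (M * n).
Proof.
move=> i x Mi; apply: big1 => m _.
by have -> : (i == m * n)%N = false by apply/negbTE; have := ltn_ord m; nia.
Qed.

Lemma gauge_unipotent : unipotent_upto gauge_fam n (fun x => - phi x).
Proof.
rewrite /gauge_fam; split=> [x | j x /andP [j0 jn] | x]; rewrite ?eqxx //.
  by rewrite gtn_eqF ?ltn_eqF.
by rewrite gtn_eqF.
Qed.

Lemma geom_low M p x : (2 <= M)%N -> (p <= n)%N ->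
  geom_fam M p x = (if p == 0%N then x else 0) + (if p == n then phi x else 0).
Proof.
move=> M2 pn; rewrite /geom_fam (eq_bigr (fun m : 'I_M =>
    (if (m : nat) == 0%N then (if p == 0%N then x else 0) else 0)
  + (if (m : nat) == 1%N then (if p == n then phi x else 0) else 0))).
  rewrite big_split /= (sum_pick _ 0 (fun _ => if p == 0%N then x else 0)).
  by rewrite (sum_pick _ 1 (fun _ => if p == n then phi x else 0)) M2 (ltnW M2).
move=> [[|[|m]] mM] _ /=; rewrite ?mul0n ?mul1n ?addr0 ?add0r //.
by have -> : (p == m.+2 * n)%N = false by apply/negbTE; nia.
Qed.

Lemma geom_unipotent M : (2 <= M)%N -> unipotent_upto (geom_fam M) n phi.
Proof.
move=> M2; split=> [x | j x /andP [j0 jn] | x].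
- by rewrite geom_low // eqxx eq_sym gtn_eqF // addr0.
- by rewrite geom_low ?(ltnW jn) // gtn_eqF // ltn_eqF // addr0.
- by rewrite geom_low // eqxx gtn_eqF // add0r.
Qed.

Lemma fsum_gauge A y : (n < A)%N -> fsum gauge_fam A y = y - phi y.
Proof.
move=> nA; rewrite /fsum /gauge_fam (eq_bigr (fun l : 'I_A =>
  (if (l : nat) == 0%N then y else 0) + (if (l : nat) == n then - phi y else 0))).
  by rewrite big_split /= (sum_pick _ 0 (fun _ => y)) (sum_pick _ n (fun _ => - phi y)) nA
             (leq_ltn_trans (leq0n n) nA).
by move=> [l lA] _ /=; case: eqVneq => [-> | _]; rewrite ?add0r // eq_sym gtn_eqF ?addr0.
Qed.

Lemma fsum_geom M A y : (M * n <= A)%N ->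
  fsum (geom_fam M) A y = \sum_(m < M) iter m phi y.
Proof.
move=> MA; rewrite /fsum /geom_fam exchange_big; apply: eq_bigr => m _.
have mnA : (m * n < A)%N by apply: leq_trans MA; rewrite ltn_pmul2r.
by rewrite (sum_pick A (m * n) (fun _ => iter m phi y)) mnA.
Qed.

Lemma geom_telescope M y : (forall z, iter M phi z = 0) ->
  \sum_(m < M) (iter m phi y - iter m.+1 phi y) = y.
Proof.
move=> nil; rewrite -(big_mkord xpredT (fun m => iter m phi y - iter m.+1 phi y)).
rewrite (telescope_sumr_eq (fun m => - iter m phi y)) //.
  by rewrite nil oppr0 sub0r opprK.
by move=> m _; rewrite opprK addrC.
Qed.

Lemma geom_gauge_inverse M A : (forall z, iter M phi z = 0) ->
  (M * n <= A)%N -> (n < A)%N ->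
  forall y, fsum (geom_fam M) A (fsum gauge_fam A y) = y /\
            fsum gauge_fam A (fsum (geom_fam M) A y) = y.
Proof.
move=> nil MA nA y; have [lphi _] := hphi.
rewrite !fsum_geom // !fsum_gauge //; split.
  under eq_bigr => m _ do rewrite (linB (lin_iter m lphi)) -iterSr.
  exact: geom_telescope.
by rewrite (lin_sum _ _ _ lphi) -sumrB; exact: geom_telescope.
Qed.

Lemma fin_support_nilpotent : fin_support G ->
  exists M, forall m z, (M <= m)%N -> iter m phi z = 0.
Proof.
move=> [lo [hi bound]]; exists (`|hi - lo|%N.+1) => m z Mm.
have lm := lin_iter m (hmap_lin hphi).
apply: (gr_ext gG (linD lm)) z => a b y Gy.
have [-> | y0] := eqVneq y 0; first exact: lin0.
apply/eqP/negP => /negP my0.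
have /andP [lob bhi] := bound _ _ _ Gy y0.
have /andP [lomb mbhi] := bound _ _ _ ((iter_hmap m).2 _ _ _ Gy) my0.
have : hi - lo <= `|hi - lo|%N%:Z by rewrite abszE ler_norm.
by move: Mm lomb mbhi; move: `|hi - lo|%N => L; nia.
Qed.

End Gauge.

Section Conjugation.
Variables (R : pzRingType) (C : lmodType R).
Variables (CG : int -> int -> C -> bool) (k : int) (w : R).
Hypothesis gG : graded_by CG.

Lemma conjugate_multifact (d' f g : nat -> C -> C) A :
  multifact CG k w d' ->
  (forall j : nat, hmap CG CG 0 j (f j)) -> (forall j : nat, hmap CG CG 0 j (g j)) ->
  fin_fam f A -> fin_fam g A ->
  (forall x, fsum g A (fsum f A x) = x) -> (forall x, fsum f A (fsum g A x) = x) ->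
  multifact CG k w (conv (conv g d') f) /\ mfact_iso CG CG (conv (conv g d') f) d'.
Proof.
move=> Hd' hf hg fA gA gf fg; have [hd' _] := Hd'.
have [N HN] := multifact_widen Hd'; set B := (A + N)%N.
have [fdB DD] := HN B (leq_addl A N); have AB : (A <= B)%N := leq_addr N A.
have fB := fin_fam_le fA AB; have gB := fin_fam_le gA AB.
have gfB x : fsum g B (fsum f B x) = x.
  by rewrite (fsum_widen _ fA AB) (fsum_widen _ gA AB).
have fgB x : fsum f B (fsum g B x) = x.
  by rewrite (fsum_widen _ gA AB) (fsum_widen _ fA AB).
have lf j := hmap_lin (hf j); have lg j := hmap_lin (hg j).
have lgd j : lin (conv g d' j) by apply: conv_lin => // i; apply: hmap_lin (hd' i).
set d'' := conv (conv g d') f; set K := (B + B + (B + B))%N.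
have BK : (B <= K)%N by rewrite /K; lia.
have eK h y : fin_fam h B -> fsum h K y = fsum h B y by move=> hB; apply: fsum_widen hB BK.
have fdK : fin_fam d'' K.
  by apply: conv_fin => //; [apply: conv_fin | apply: fin_fam_le fB _; lia].
have tot y : fsum d'' K y = fsum g B (fsum d' B (fsum f B y)).
  rewrite (fsum_conv y lgd (conv_fin lg gB fdB) (fin_fam_le fB (leq_addr _ _)) (leqnn _)).
  by rewrite (fsum_widen _ fB (leq_addr _ _)) (fsum_conv _ lg gB fdB (leqnn _)).
have lG : lin (fsum g B) by apply: (@lin_big _ _ _ _ _ (fun (i : 'I_B) x => g i x)).
have fK := fin_fam_le fB BK; have gK := fin_fam_le gB BK; have d'K := fin_fam_le fdB BK.
split.
  split; first by move=> i; have := conv_hmap i gG (fun j => conv_hmap j gG hg hd') hf;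
    rewrite add0r addr0.
  by exists K; split=> // x; rewrite !tot fgB DD (linZ lG) gfB.
exists f, g; split.
- split=> //; exists K; split=> // x.
  by rewrite tot !eK // fgB.
- split=> //; exists K; split=> // x.
  by rewrite tot !eK // fgB.
- by exists K; split=> // x; rewrite !eK.
Qed.

End Conjugation.

Lemma gauge_perturbation (R : pzRingType) (C : lmodType R)
  (CG : int -> int -> C -> bool) (k : int) (w : R) (d' : nat -> C -> C)
  (n : nat) (phi : C -> C) :
  graded_by CG -> fin_support CG -> multifact CG k w d' -> (0 < n)%N ->
  hmap CG CG 0 n phi ->
  exists d'' : nat -> C -> C,
    [/\ multifact CG k w d'', mfact_iso CG CG d'' d' &
        forall i x, (i <= n)%N ->
          d'' i x = d' i x + (if i == n then phi (d' 0%N x) - d' 0%N (phi x) else 0)].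
Proof.
move=> gG Hfs Hd' n0 hphi; have [hd' _] := Hd'.
have [M nil] := fin_support_nilpotent gG n0 hphi Hfs.
have nilM z : iter M.+2 phi z = 0 by apply: nil; rewrite leqW.
set A := (M.+2 * n + n.+1)%N.
have inv := geom_gauge_inverse n0 hphi nilM (leq_addr _ _) (leq_addl _ _ : (n < A)%N).
have [Hd'' Hiso] := conjugate_multifact gG Hd'
  (gauge_hmap gG hphi) (geom_hmap gG hphi M.+2)
  (fin_fam_le (gauge_fin phi) (leq_addl _ _))
  (fin_fam_le (geom_fin phi n0 (M := M.+2)) (leq_addr _ _))
  (fun x => (inv x).1) (fun x => (inv x).2).
exists (conv (conv (geom_fam n phi M.+2) d') (gauge_fam n phi)); split=> // i x iN.
have lgd j : lin (conv (geom_fam n phi M.+2) d' j).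
  apply: conv_lin => l; first exact: hmap_lin (geom_hmap gG hphi _ l).
  exact: hmap_lin (hd' l).
have geom_l := conv_unipotent_l d' _ n0 (geom_unipotent phi n0 (isT : (2 <= M.+2)%N)).
rewrite (conv_unipotent_r x n0 lgd (gauge_unipotent phi n0) iN) !geom_l //.
case: eqVneq => [_ | _]; last by rewrite !addr0.
by rewrite (eq_sym 0%N) gtn_eqF // addr0 (linN (hmap_lin (hd' 0%N))) addrA.
Qed.

Unset Implicit Arguments. Set Strict Implicit.

Theorem lemma2p3 (R : pzRingType) (RG : int -> int -> R -> bool)
  (C : lmodType R) (CG : int -> int -> C -> bool)
  (k : int) (w : R) (d d' : nat -> C -> C) (n : nat) :
  bigraded_ring RG -> bigraded_module RG CG ->
  odd `|k|%N -> RG (k *+ 2) 0 w ->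
  fin_support CG ->
  multifact CG k w d -> multifact CG k w d' ->
  (1 <= n)%N -> (forall i, (i < n)%N -> d i = d' i) ->
  chain_map CG (shiftG CG (- k) 0) (mf_fam (d 0%N)) (shift_fam (- k) (mf_fam (d 0%N)))
    (single n (fun x => d n x - d' n x)) /\
  (homotopic0 CG (shiftG CG (- k) 0) k (mf_fam (d 0%N)) (shift_fam (- k) (mf_fam (d 0%N)))
     (single n (fun x => d n x - d' n x)) (fun _ _ => 0) ->
   exists d'' : nat -> C -> C,
     [/\ multifact CG k w d'', mfact_iso CG CG d'' d' &
         forall i, (i < n.+1)%N -> d'' i = d i]).
Proof.
move=> _ HM kodd Hw Hfs Hd Hd' n0 Heq.
have gG : graded_by CG by case: HM.
split; first exact: (difference_chain_map HM Hw kodd Hd Hd' n0 Heq).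
move=> /(homotopy_gauge HM kodd Hd Hd') [phi [hphi Ephi]].
have [d'' [Hd'' Hiso Hlow]] := gauge_perturbation gG Hfs Hd' n0 hphi.
exists d''; split=> // i ilt; apply: functional_extensionality => x.
rewrite Hlow //; case: eqVneq => [-> | ni].
  by rewrite -(Heq 0%N n0) -Ephi addrC subrK.
by rewrite addr0 Heq //; lia.
Qed.
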